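(* Let $n\ge1$ and $P=\Phi^+(A_n)=\{(i,j)\colon1\le i,j\le n,\ i+j\ge n+1\}$. For $1\le i\le n$ let $\overline{R}_i\coloneqq\sum_{j'\ge n+1-i}T^-_{(i,j')}+\sum_{i'\ge i}T^-_{(i',n+1-i)}$ (sums over elements of $P$). Then \[\tfrac12\big(\overline{R}_1-\overline{R}_2+\overline{R}_3-\cdots+(-1)^{n-1}\overline{R}_n\big)\equiv^q\begin{cases}0&\text{if $n$ is even},\\ \frac{1}{q+1}&\text{if $n$ is odd}.\end{cases}\]
   Context: $P$ is ordered by $(i,j)\le(i',j')$ iff $i\le i'$ and $j\le j'$. $\mathcal{J}(P)$ is the set of order ideals. For $p\in P$, $I\in\mathcal{J}(P)$: $T_p^+(I)=1$ if $p$ is minimal in $P\setminus I$, else $0$; $T_p^-(I)=1$ if $p$ is maximal in $I$, else $0$; $T_p^q=T_p^+-qT_p^-$ with $q$ an indeterminate. For $f,g\colon\mathcal{J}(P)\to\mathbb{R}(q)$, $f\equiv^q g$ means $f-g=\sum_{p\in P}c_p(q)T_p^q$ for some $c_p(q)\in\mathbb{R}(q)$; an element of $\mathbb{R}(q)$ denotes a constant function. *)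

From HB Require Import structures.
From mathcomp Require Import all_boot all_order all_algebra fraction.
From mathcomp Require Import reals.
Set Implicit Arguments. Unset Strict Implicit. Unset Printing Implicit Defensive.
Import Order.TTheory GRing.Theory Num.Theory.
Local Open Scope ring_scope.

(* The poset P = Phi^+(A_n) = {(i,j) : 1 <= i,j <= n, i + j >= n+1},
   1-indexed: coordinates are stored as ordinals of 'I_n.+1 (values 0..n),
   and the predicate enforces 1 <= i, 1 <= j, i + j >= n+1. *)
Definition inPhi (n : nat) (p : 'I_n.+1 * 'I_n.+1) : bool :=
  [&& (1 <= nat_of_ord p.1)%N, (1 <= nat_of_ord p.2)%N & (n.+1 <= nat_of_ord p.1 + nat_of_ord p.2)%N].

Definition Phi (n : nat) := {p : 'I_n.+1 * 'I_n.+1 | inPhi p}.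

Definition pi1 n (p : Phi n) : nat := (val p).1.
Definition pi2 n (p : Phi n) : nat := (val p).2.

Definition ple n (p p' : Phi n) : bool :=
  (pi1 p <= pi1 p')%N && (pi2 p <= pi2 p')%N.
Definition plt n (p p' : Phi n) : bool := (p != p') && ple p p'.

Definition is_ideal n (I : {set Phi n}) : bool :=
  [forall p, forall p', (p' \in I) ==> ple p p' ==> (p \in I)].

Definition ideals n := {I : {set Phi n} | is_ideal I}.

Definition ratfun (R : realType) := {fraction {poly R}}.
Definition qvar (R : realType) : ratfun R := tofrac 'X.

(* T_p^+(I) = 1 iff p is minimal in P \ I. *)
Definition Tplus (R : realType) n (p : Phi n) (I : ideals n) : ratfun R :=
  ((p \notin val I) && [forall p', plt p' p ==> (p' \notin val I) ==> false])%:R.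

Definition Tminus (R : realType) n (p : Phi n) (I : ideals n) : ratfun R :=
  ((p \in val I) && [forall p', (p' \in val I) ==> ~~ plt p p'])%:R.

Definition Tq (R : realType) n (p : Phi n) (I : ideals n) : ratfun R :=
  Tplus R p I - qvar R * Tminus R p I.

Definition qequiv (R : realType) n (f g : ideals n -> ratfun R) : Prop :=
  exists c : Phi n -> ratfun R,
    forall I : ideals n, f I - g I = \sum_(p : Phi n) c p * Tq R p I.

Definition Rbar (R : realType) n (i : nat) (I : ideals n) : ratfun R :=
  \sum_(p : Phi n | (pi1 p == i) && (n.+1 - i <= pi2 p)%N) Tminus R p I
  + \sum_(p : Phi n | (pi2 p == n.+1 - i)%N && (i <= pi1 p)%N) Tminus R p I.

From mathcomp Require Import all_boot all_order all_algebra fraction.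
From mathcomp Require Import reals.
From mathcomp Require Import ring zify.
Import GRing.Theory Num.Theory.
Local Open Scope ring_scope.
Set Implicit Arguments. Unset Strict Implicit. Unset Printing Implicit Defensive.

(* Each T^-_(a,b) occurs in Rbar_a and in Rbar_(n+1-b), with signs (-1)^(a-1)
   and (-1)^(n-b); these agree exactly when a + b + n is odd, so the alternating
   sum is 2 sum_p wt_p T^-_p.  Since T^q = T^+ - q T^-, a weighted sum of the
   T^- is q-equivalent to the same weighted sum of T^+ + T^- divided by q + 1,
   and it remains to show sum_p wt_p (T^+_p + T^-_p) = [n odd] for every ideal I.
   Let X be the indicator of the order ideal of the grid {0..n+1}^2 generated
   by I and the points of {0..n}^2 outside P.  Then T^-_p and T^+_p are
   polynomials in the values of X at p and its four neighbours.  In the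
   weighted sum the linear terms cancel because wt(a,b+1) = -wt(a+1,b), and the
   quadratic terms telescope along the antidiagonals to sum_(a<n) (-1)^a,
   contributed by the points just below P, where X = 1. *)

Section PhiCoordinates.
Variable n : nat.
Implicit Types p : Phi n.

Lemma Phi_bounds p :
  [/\ (pi1 p <= n)%N, (pi2 p <= n)%N & (n < pi1 p + pi2 p)%N].
Proof.
case: p => [[a b] hP]; rewrite /pi1 /pi2 /=; case/and3P: hP => _ _ hab.
by split => //; rewrite -ltnS.
Qed.

Lemma Phi_inj p p' : pi1 p = pi1 p' -> pi2 p = pi2 p' -> p = p'.
Proof.
move=> e1 e2; apply: val_inj.
by rewrite [val p]surjective_pairing (ord_inj e1) (ord_inj e2) -surjective_pairing.
Qed.

Lemma Phi_at a b : (a <= n)%N -> (b <= n)%N -> (n < a + b)%N ->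
  exists p, pi1 p = a /\ pi2 p = b.
Proof.
move=> ha hb hab; have ha' : (a < n.+1)%N by []; have hb' : (b < n.+1)%N by [].
have hP : inPhi (Ordinal ha', Ordinal hb') by apply/and3P; split => /=; lia.
by exists (exist (fun x => inPhi x) _ hP).
Qed.

Lemma plt_Phi p p' : plt p p' =
  ((pi1 p < pi1 p') && (pi2 p <= pi2 p'))%N || ((pi1 p <= pi1 p') && (pi2 p < pi2 p'))%N.
Proof.
rewrite /plt /ple; apply/andP/idP => [[/eqP hne le_pp'] | lt_pp'].
  by apply/negPn/negP => h; apply/hne/Phi_inj; lia.
by split; [apply/eqP => e; move: lt_pp'; rewrite e; lia | lia].
Qed.

Lemma ideal_downclosed (I : ideals n) p p' : ple p p' -> p' \in val I -> p \in val I.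
Proof.
case: I => S /= hS le_pp' hp'.
exact: implyP (implyP (forallP (forallP hS p) p') hp') le_pp'.
Qed.

Lemma sum_Phi_grid (V : zmodType) (G : nat -> nat -> V) :
  (forall a b, (a + b <= n)%N -> G a b = 0) ->
  \sum_(p : Phi n) G (pi1 p) (pi2 p) = \sum_(0 <= a < n.+1) \sum_(0 <= b < n.+1) G a b.
Proof.
move=> G0; rewrite [RHS]big_mkord.
rewrite (eq_bigr (fun a : 'I_n.+1 => \sum_(b < n.+1) G a b)) => [|a _]; last first.
  by rewrite big_mkord.
rewrite pair_bigA /= (bigID (@inPhi n)) /= [X in _ = _ + X]big1 ?addr0 => [|[a b] /= hP].
  by rewrite (big_sub (@inPhi n) (fun x => G x.1 x.2)).
by apply: G0; move: hP; rewrite /inPhi /=; have := ltn_ord a; have := ltn_ord b; lia.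
Qed.

End PhiCoordinates.

Section GridIdeal.
Variables (n : nat) (I : ideals n).
Implicit Types p : Phi n.

Definition ext (a b : nat) : bool :=
  (a + b <= n)%N || [exists p in val I, (a <= pi1 p) && (b <= pi2 p)]%N.

Lemma ext_le a b a' b' : (a' <= a)%N -> (b' <= b)%N -> ext a b -> ext a' b'.
Proof.
move=> ha hb /orP[hab | /exists_inP[p hp /andP[h1 h2]]]; apply/orP; first by left; lia.
by right; apply/exists_inP; exists p => //; apply/andP; split; lia.
Qed.

Lemma ext_low a b : (a + b <= n)%N -> ext a b.
Proof. by rewrite /ext => ->. Qed.

Lemma ext_Phi p : ext (pi1 p) (pi2 p) = (p \in val I).
Proof.
have [_ _ hp] := Phi_bounds p.
apply/idP/idP => [/orP[hle | /exists_inP[p' hp' le_pp']] | hpI]; first by lia.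
  exact: ideal_downclosed le_pp' hp'.
by apply/orP; right; apply/exists_inP; exists p; rewrite ?leqnn.
Qed.

Lemma ext_row b : ext n.+1 b = false.
Proof.
apply/negbTE/norP; split; first by lia.
by apply/exists_inP => -[p _ /andP[h _]]; have [hp _ _] := Phi_bounds p; lia.
Qed.

Lemma ext_col a : ext a n.+1 = false.
Proof.
apply/negbTE/norP; split; first by lia.
by apply/exists_inP => -[p _ /andP[_ h]]; have [_ hp _] := Phi_bounds p; lia.
Qed.

Lemma ext_succ p :
  [exists p' in val I, plt p p'] = ext (pi1 p).+1 (pi2 p) || ext (pi1 p) (pi2 p).+1.
Proof.
have [_ _ hp] := Phi_bounds p.
rewrite /ext (_ : _.+1 + _ <= n = false)%N; last by apply/negbTE; lia.
rewrite (_ : _ + _.+1 <= n = false)%N /=; last by apply/negbTE; lia.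
apply/exists_inP/orP => [[p' hp'] | ].
  by rewrite plt_Phi => /orP[] h; [left | right]; apply/exists_inP; exists p'.
by case=> /exists_inP[p' hp' h]; exists p' => //; rewrite plt_Phi h ?orbT.
Qed.

Lemma ext_pred p :
  [forall p', plt p' p ==> (p' \in val I)] = ext (pi1 p).-1 (pi2 p) && ext (pi1 p) (pi2 p).-1.
Proof.
have [ha hb hab] := Phi_bounds p.
apply/forallP/andP => [lower | [h1 h2] p'].
  have ext_lower a b : (a <= n)%N -> (b <= n)%N ->
      ((a < pi1 p) && (b <= pi2 p))%N || ((a <= pi1 p) && (b < pi2 p))%N -> ext a b.
    move=> ha' hb' lt_ab; case: (leqP (a + b) n) => [|hab']; first exact: ext_low.
    have [p' [e1 e2]] := Phi_at ha' hb' hab'.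
    by rewrite -e1 -e2 ext_Phi; apply: (implyP (lower p')); rewrite plt_Phi e1 e2.
  by split; apply: ext_lower; lia.
apply/implyP; rewrite plt_Phi -ext_Phi => /orP[] /andP[h h'].
  by apply: ext_le h1; lia.
by apply: ext_le h2; lia.
Qed.

End GridIdeal.

Arguments ext : simpl never.

Lemma natr_peak (V : ringType) (x y z : bool) : (y ==> x) -> (z ==> x) ->
  (x && ~~ y && ~~ z)%:R = x%:R - y%:R - z%:R + y%:R * z%:R :> V.
Proof.
by case: x y z => [] [] [] //= _ _;
  rewrite ?(mulr0, mulr1, mul0r, subr0, subrr, sub0r, add0r, addr0, addNr).
Qed.

Lemma natr_valley (V : ringType) (x y z : bool) : (x ==> y) -> (x ==> z) ->
  (~~ x && y && z)%:R = y%:R * z%:R - x%:R :> V.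
Proof. by case: x y z => [] [] [] //= _ _; rewrite ?(mulr0, mulr1, mul0r, subr0, subrr). Qed.

(* The exponent a.+1 agrees with a - 1 on P and makes wt_anti and wt_diag hold
   for all a, b. *)
Definition wt (V : ringType) (n a b : nat) : V :=
  (-1) ^+ a.+1 *+ ((n < a + b)%N && odd (a + b + n)).
Arguments wt {V} n a b.

Section Weights.
Variables (V : ringType) (n : nat).

Lemma wt_eq0 a b : (a + b <= n)%N -> wt n a b = 0 :> V.
Proof. by move=> hab; rewrite /wt ltnNge hab. Qed.

Lemma wt_anti a b : wt n a b.+1 + wt n a.+1 b = 0 :> V.
Proof. by rewrite /wt addnS addSn [(-1) ^+ a.+2]exprS mulN1r mulNrn addrN. Qed.

Lemma wt_diag a b : wt n a b + wt n a.+1 b.+1 = (-1) ^+ a *+ (a.+1 + b == n)%N :> V.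
Proof.
rewrite /wt addSn addnS 2!addSn !oddS negbK !exprS !mulN1r opprK mulNrn.
have [<- | hne] := eqVneq (a + b).+1 n.
  by rewrite ltnNge leqnSn ltnSn addnS /= addnn odd_double /= mulr0n oppr0 add0r.
rewrite mulr0n; apply/eqP; rewrite addrC subr_eq0; apply/eqP; congr (_ *+ _).
case: (ltnP n (a + b)) => hn; first by rewrite (_ : n < (a + b).+2)%N //; lia.
case: (eqVneq n (a + b)) => [-> | hne']; first by rewrite addnn odd_double !andbF.
by rewrite ltnNge (_ : (a + b).+2 <= n)%N //; lia.
Qed.

Lemma signr_add_wt a b : (1 <= a)%N -> (b <= n)%N -> (n < a + b)%N ->
  (-1) ^+ (a - 1) + (-1) ^+ (n - b) = 2 * wt n a b :> V.
Proof.
move=> ha hb hab; rewrite /wt hab /= mulr_natl.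
rewrite -(signr_odd _ (a - 1)) -(signr_odd _ (n - b)) -(signr_odd _ a.+1) !oddB // !oddD /=.
by case: (odd a) (odd b) (odd n) => [] [] [];
  rewrite /= ?expr0 ?expr1 ?mulr2n ?mulr1n ?mulr0n ?addr0 ?subrr ?addNr.
Qed.

End Weights.

Lemma sum_signr_nat (V : ringType) m : \sum_(0 <= a < m) (-1) ^+ a = (odd m)%:R :> V.
Proof.
elim: m => [|m IH]; first by rewrite big_geq.
rewrite big_nat_recr //= IH -signr_odd.
by case: (odd m); rewrite /= ?expr0 ?expr1 ?add0r ?subrr.
Qed.

Section ExtendedIdeal.
Variables (R : realType) (n : nat) (I : ideals n).
Local Notation X a b := ((ext I a b)%:R : ratfun R).

Lemma Tminus_ext (p : Phi n) : Tminus R p I =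
  (ext I (pi1 p) (pi2 p) && ~~ ext I (pi1 p).+1 (pi2 p) && ~~ ext I (pi1 p) (pi2 p).+1)%:R.
Proof. by rewrite /Tminus ext_Phi -negb_exists_in ext_succ negb_or andbA. Qed.

Lemma Tplus_ext (p : Phi n) : Tplus R p I =
  (~~ ext I (pi1 p) (pi2 p) && ext I (pi1 p).-1 (pi2 p) && ext I (pi1 p) (pi2 p).-1)%:R.
Proof.
rewrite /Tplus ext_Phi -andbA -ext_pred.
by under eq_forallb => p' do rewrite implybF negbK.
Qed.

Lemma Tplus_add_Tminus (p : Phi n) :
  Tplus R p I + Tminus R p I =
    X (pi1 p).+1 (pi2 p) * X (pi1 p) (pi2 p).+1 + X (pi1 p).-1 (pi2 p) * X (pi1 p) (pi2 p).-1
    - (X (pi1 p).+1 (pi2 p) + X (pi1 p) (pi2 p).+1).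
Proof.
rewrite Tplus_ext Tminus_ext natr_valley ?natr_peak;
  try by apply/implyP/ext_le; rewrite ?leqnSn ?leq_pred.
by ring.
Qed.

Lemma grid_quadratic :
  \sum_(0 <= a < n.+1) \sum_(0 <= b < n.+1)
     wt n a b * (X a.+1 b * X a b.+1 + X a.-1 b * X a b.-1) = (odd n)%:R.
Proof.
under eq_bigr do under eq_bigr do rewrite mulrDr.
under eq_bigr do rewrite big_split /=.
rewrite big_split /=.
have -> : \sum_(0 <= a < n.+1) \sum_(0 <= b < n.+1) wt n a b * (X a.+1 b * X a b.+1)
    = \sum_(0 <= a < n) \sum_(0 <= b < n) wt n a b * (X a.+1 b * X a b.+1).
  rewrite big_nat_recr //= [Y in _ + Y]big1 ?addr0 => [|b _]; last by rewrite ext_row mul0r mulr0.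
  by apply: eq_bigr => a _; rewrite big_nat_recr //= ext_col !mulr0 addr0.
have -> : \sum_(0 <= a < n.+1) \sum_(0 <= b < n.+1) wt n a b * (X a.-1 b * X a b.-1)
    = \sum_(0 <= a < n) \sum_(0 <= b < n) wt n a.+1 b.+1 * (X a b.+1 * X a.+1 b).
  rewrite big_nat_recl //= [Y in Y + _]big_nat_cond [Y in Y + _]big1 ?add0r => [|b]; last first.
    by case/andP => /andP[_ hb] _; rewrite wt_eq0 ?mul0r.
  apply: eq_big_nat => a /andP[_ ha].
  by rewrite big_nat_recl //= wt_eq0 ?mul0r ?add0r //; lia.
rewrite -big_split /= -sum_signr_nat; apply: eq_big_nat => a /andP[_ ha].
have diag b : wt n a b * (X a.+1 b * X a b.+1) + wt n a.+1 b.+1 * (X a b.+1 * X a.+1 b)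
    = if b == (n - a.+1)%N then (-1) ^+ a else 0.
  rewrite [X a b.+1 * _]mulrC -mulrDl wt_diag.
  have [-> | hb] := eqVneq b (n - a.+1)%N.
    by rewrite subnKC // eqxx mulr1n !ext_low ?mulr1 //; lia.
  by rewrite (_ : (a.+1 + b == n) = false)%N ?mul0r //; apply/negbTE; lia.
rewrite -big_split /=; under eq_bigr do rewrite diag.
by rewrite -big_mkcond big_nat1_eq ifT //; apply/andP; split; lia.
Qed.

Lemma grid_linear :
  \sum_(0 <= a < n.+1) \sum_(0 <= b < n.+1) wt n a b * (X a.+1 b + X a b.+1) = 0.
Proof.
under eq_bigr do under eq_bigr do rewrite mulrDr.
under eq_bigr do rewrite big_split /=.
rewrite big_split /=.
have -> : \sum_(0 <= a < n.+1) \sum_(0 <= b < n.+1) wt n a b * X a.+1 b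
    = \sum_(0 <= a < n) \sum_(0 <= b < n) wt n a b.+1 * X a.+1 b.+1.
  rewrite big_nat_recr //= [Y in _ + Y]big1 ?addr0 => [|b _]; last by rewrite ext_row mulr0.
  by apply: eq_big_nat => a /andP[_ ha]; rewrite big_nat_recl //= wt_eq0 ?mul0r ?add0r //; lia.
have -> : \sum_(0 <= a < n.+1) \sum_(0 <= b < n.+1) wt n a b * X a b.+1
    = \sum_(0 <= a < n) \sum_(0 <= b < n) wt n a.+1 b * X a.+1 b.+1.
  rewrite big_nat_recl //= [Y in Y + _]big_nat_cond [Y in Y + _]big1 ?add0r => [|b]; last first.
    by case/andP => /andP[_ hb] _; rewrite wt_eq0 ?mul0r.
  by apply: eq_bigr => a _; rewrite big_nat_recr //= ext_col mulr0 addr0.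
rewrite -big_split big1 //= => a _; rewrite -big_split big1 //= => b _.
by rewrite -mulrDl wt_anti mul0r.
Qed.

Lemma sum_wt_Tplus_Tminus :
  \sum_(p : Phi n) wt n (pi1 p) (pi2 p) * (Tplus R p I + Tminus R p I) = (odd n)%:R.
Proof.
under eq_bigr do rewrite Tplus_add_Tminus mulrBr.
rewrite (sum_Phi_grid (G := fun a b => wt n a b * (X a.+1 b * X a b.+1 + X a.-1 b * X a b.-1)
                                       - wt n a b * (X a.+1 b + X a b.+1))); last first.
  by move=> a b hab; rewrite wt_eq0 ?mul0r ?subr0.
under eq_bigr do rewrite sumrB.
by rewrite sumrB grid_quadratic grid_linear subr0.
Qed.

End ExtendedIdeal.

Lemma sum_fibers_nat (V : ringType) (T : finType) (f : T -> nat) m k (c : nat -> V) (F : T -> V) :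
  (forall x, m <= f x < k)%N ->
  \sum_(m <= i < k) c i * \sum_(x | f x == i) F x = \sum_x c (f x) * F x.
Proof.
move=> f_range; under eq_bigr do rewrite big_distrr big_mkcond /=.
rewrite exchange_big /=; apply: eq_bigr => x _.
rewrite -big_mkcond (eq_bigl (eq_op^~ (f x))) => [|i]; last exact: eq_sym.
by rewrite big_nat1_eq f_range.
Qed.

Lemma Rbar_fibers (R : realType) n i (I : ideals n) :
  Rbar R i I = \sum_(p | pi1 p == i) Tminus R p I + \sum_(p | (n.+1 - pi2 p == i)%N) Tminus R p I.
Proof.
rewrite /Rbar; congr (_ + _); apply: eq_bigl => p; have [ha hb hab] := Phi_bounds p.
  by apply/andP/idP => [[] // | /eqP <-]; split; lia.
by apply/andP/idP => [[/eqP e _] | /eqP <-]; [apply/eqP; lia | split; [apply/eqP|]; lia].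
Qed.

Lemma alt_sum_Rbar (R : realType) n (I : ideals n) :
  \sum_(1 <= i < n.+1) (-1) ^+ (i - 1) * Rbar R i I =
  2 * \sum_(p : Phi n) wt n (pi1 p) (pi2 p) * Tminus R p I.
Proof.
under eq_bigr do rewrite Rbar_fibers mulrDr.
rewrite big_split /= !sum_fibers_nat => [|p|p];
  try by have [ha hb hab] := Phi_bounds p; apply/andP; split; lia.
rewrite -big_split mulr_sumr /=; apply: eq_bigr => p _.
have [ha hb hab] := Phi_bounds p.
by rewrite -mulrDl (_ : n.+1 - pi2 p - 1 = n - pi2 p)%N ?signr_add_wt ?mulrA //; lia.
Qed.

Lemma qvar_add1_neq0 (R : realType) : qvar R + 1 != 0.
Proof. by rewrite /qvar -tofrac1 -tofracD tofrac_eq0 -polyC1 -size_poly_eq0 size_XaddC. Qed.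

Lemma ratfun_natr_eq0 (R : realType) k : ((k%:R : ratfun R) == 0) = (k == 0)%N.
Proof. by rewrite -tofrac1 -tofracMn tofrac_eq0 -polyC1 -polyCMn polyC_eq0 pnatr_eq0. Qed.

Lemma qequiv_Tminus (R : realType) n (w : Phi n -> ratfun R) (k : ratfun R) :
  (forall I, \sum_(p : Phi n) w p * (Tplus R p I + Tminus R p I) = k) ->
  qequiv (fun I => \sum_(p : Phi n) w p * Tminus R p I) (fun _ => k / (qvar R + 1)).
Proof.
move=> hk; exists (fun p => - w p / (qvar R + 1)) => I.
have -> : \sum_(p : Phi n) (- w p / (qvar R + 1)) * Tq R p I =
    - ((qvar R + 1)^-1 * (k - (qvar R + 1) * \sum_(p : Phi n) w p * Tminus R p I)).
  rewrite -(hk I) mulr_sumr -sumrB mulr_sumr -sumrN; apply: eq_bigr => p _.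
  by rewrite /Tq; ring.
by rewrite mulrBr mulrA mulVf ?qvar_add1_neq0 // mul1r opprB mulrC.
Qed.

Theorem theorem5p17 (R : realType) (n : nat) (hn : (1 <= n)%N) :
  @qequiv R n
    (fun I : ideals n =>
       2^-1 * \sum_(1 <= i < n.+1) (-1) ^+ (i - 1) * Rbar R i I)
    (fun _ : ideals n => if odd n then (qvar R + 1)^-1 else 0).
Proof.
have [c hc] := qequiv_Tminus (@sum_wt_Tplus_Tminus R n).
exists c => I; rewrite -hc alt_sum_Rbar mulKf ?ratfun_natr_eq0 //.
by case: odd; rewrite ?mul1r ?mul0r.
Qed.
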